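(* For every $\delta>0$ there exists $N_0$ such that for all $N\ge N_0$, all $\mathscr P\subseteq\{1,\dots,N-1\}$ and all $g\in C([0,1];\mathbb R)$, $$\gamma^{\mathbf 0}_{[-1,N+1]\setminus\mathscr P}\big(\|h_N-g\|_\infty<\delta\big)\le\exp\Big(-N\inf_h\mathscr E_N(h)\Big),$$ where the infimum is over all $h:\{-\frac1N,0,\frac1N,\dots,1,1+\frac1N\}\to\mathbb R$ with $\max_{0\le j\le N}|h(j/N)-g(j/N)|\le2\delta$.
   Context: $\mathcal H_{[-1,N+1]}(\phi)=\sum_{k=0}^{N}\frac12(\phi_{k+1}+\phi_{k-1}-2\phi_k)^2$. $\gamma^{\mathbf 0}_{[-1,N+1]\setminus\mathscr P}$ is the centred Gaussian probability measure on $\phi:\{-1,\dots,N+1\}\to\mathbb R$ proportional to $e^{-\mathcal H_{[-1,N+1]}(\phi)}\prod_{k\in\{1,\dots,N-1\}\setminus\mathscr P}d\phi_k\prod_{k\in\mathscr P\cup\{-1,0,N,N+1\}}\delta_0(d\phi_k)$. $h_N$ is the linear interpolation on $[0,1]$ of $h_N(k/N)=\phi_k/N^2$; $\|\cdot\|_\infty$ is the sup norm on $[0,1]$. $\mathscr E_N(h)=\frac12\sum_{j=0}^N\frac1N N^4\big(h(\frac{j+1}N)+h(\frac{j-1}N)-2h(\frac jN)\big)^2$, so that $\mathcal H_{[-1,N+1]}(\phi)=N\mathscr E_N(h_N)$. *)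

From HB Require Import structures.
From mathcomp Require Import all_boot all_order all_algebra.
From mathcomp Require Import all_classical all_reals all_analysis.
Set Implicit Arguments. Unset Strict Implicit. Unset Printing Implicit Defensive.
Import Order.TTheory GRing.Theory Num.Theory numFieldNormedType.Exports.
Local Open Scope ring_scope.
Local Open Scope classical_set_scope.

(* Fields phi : {-1,...,N+1} -> R are represented as functions int -> R;
   only the values at -1..N+1 matter. *)

Definition Hbilap {R : realType} (N : nat) (phi : int -> R) : R :=
  \sum_(0 <= k < N.+1)
    (2^-1 * (phi (k%:Z + 1) + phi (k%:Z - 1) - 2 * phi k%:Z) ^+ 2).

(* E_N(h), h given by its values h(j/N) =: h j, j = -1..N+1 *)
Definition EN {R : realType} (N : nat) (h : int -> R) : R :=
  2^-1 * \sum_(0 <= j < N.+1)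
    (N%:R^-1 * N%:R ^+ 4 * (h (j%:Z + 1) + h (j%:Z - 1) - 2 * h j%:Z) ^+ 2).

Definition upd {R : realType} (phi : int -> R) (k : nat) (x : R) : int -> R :=
  fun i => if i == k%:Z then x else phi i.

(* iterated Lebesgue integral over the coordinates listed in l
   (for nonnegative integrands this is the integral w.r.t. Lebesgue
   measure on R^l, by Tonelli) *)
Fixpoint iter_int {R : realType} (l : seq nat) (f : (int -> R) -> \bar R)
    (phi : int -> R) : \bar R :=
  match l with
  | [::] => f phi
  | k :: l' => (\int[@lebesgue_measure R]_x iter_int l' f (upd phi k x))%E
  end.

Definition free_sites (N : nat) (P : pred nat) : seq nat :=
  [seq k <- iota 1 N.-1 | ~~ P k].

(* gamma^0_{[-1,N+1]\P}(A) : pinned sites (P, -1, 0, N, N+1) are 0, density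
   proportional to exp(-H) w.r.t. Lebesgue measure on the free sites *)
Definition gamma0 {R : realType} (N : nat) (P : pred nat)
    (A : set (int -> R)) : R :=
  fine (iter_int (free_sites N P)
          (fun phi => ((\1_A phi) * expR (- Hbilap N phi))%:E) (fun _ => 0))
  / fine (iter_int (free_sites N P)
          (fun phi => (expR (- Hbilap N phi))%:E) (fun _ => 0)).

(* h_N : linear interpolation on [0,1] of h_N(k/N) = phi_k / N^2 *)
Definition hN {R : realType} (N : nat) (phi : int -> R) (t : R) : R :=
  let k := minn (Num.truncn (t * N%:R)) N.-1 in
  (phi k%:Z + (t * N%:R - k%:R) * (phi (k%:Z + 1) - phi k%:Z)) / N%:R ^+ 2.

Definition supnorm01 {R : realType} (f : R -> R) : R :=
  sup [set `|f t| | t in `[0, 1]].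

From HB Require Import structures.
From mathcomp Require Import all_boot all_order all_algebra.
From mathcomp Require Import all_classical all_reals all_analysis.
From mathcomp Require Import measurable_realfun.
From mathcomp Require Import ring lra.
Import Order.TTheory GRing.Theory Num.Theory numFieldNormedType.Exports.
Local Open Scope ring_scope.
Local Open Scope classical_set_scope.

(* On the event, every admissible field lies in the box K of fields, pinned
   to 0 off the free sites, whose rescaled grid values are within delta of g.
   Let x minimise the convex quadratic form H over the compact box K.  The
   variational inequality gives H(phi) >= H(x) + H(phi - x) on K, so the
   numerator of gamma0 is at most exp(-H(x)) times the integral of
   exp(-H(phi - x)), which is the normalisation by translation invariance of
   Lebesgue measure.  Finally H(x) = N E_N(x / N^2) and x / N^2 is
   delta-close to g on the grid (at pinned sites because some field of the
   event vanishes there; if there is none, the numerator is 0). *)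

Set Implicit Arguments. Unset Strict Implicit. Unset Printing Implicit Defensive.

Section lebesgue_translation.
Context {R : realType}.
Local Notation mu := (@lebesgue_measure R).

Let measurable_shift (a : R) :
  measurable_fun [set: measurableTypeR R]
    (fun x : measurableTypeR R => (x + a : measurableTypeR R)).
Proof. exact: measurable_funD. Qed.

(* The pushforward of Lebesgue measure by a translation gives half-open
   intervals their length, hence is Lebesgue measure. *)
Lemma lebesgue_measure_shift (a : R) (A : set R) : measurable A ->
  mu ((fun x => x + a) @^-1` A) = mu A.
Proof.
move=> mA; have := @lebesgue_measure_unique R
  (measure_function_pushforward__canonical__measure_function_Measure mu
     (measurable_shift a)).
move=> /(_ _ A mA) /= -> //= _ [[b c]] _ <-; rewrite /pushforward /=.
have -> : (fun x => x + a) @^-1` `]b, c] = `](b - a), (c - a)]%classic.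
  by apply/seteqP; split => x /=; rewrite !in_itv /= ltrBlDr lerBrDr.
rewrite !lebesgue_measure_itv/= !lte_fin ltrD2r; case: ifP => // _.
by rewrite -!EFinD; congr (_%:E); ring.
Qed.

Import HBNNSimple.

Section shift_nnsfun.
Variables (h : {nnsfun measurableTypeR R >-> R}) (a : R).

Definition shift_fun (x : measurableTypeR R) : R := h (x + a).

Let shift_fun_ge0 x : 0 <= shift_fun x. Proof. by []. Qed.
HB.instance Definition _ := isNonNegFun.Build _ _ shift_fun shift_fun_ge0.

Let shift_fun_fin : finite_set (range shift_fun).
Proof.
apply: sub_finite_set (@fimfunP _ _ h).
by move=> _ [x _ <-]; exists (x + a).
Qed.
HB.instance Definition _ := FiniteImage.Build _ _ shift_fun shift_fun_fin.

Let measurable_shift_fun : measurable_fun setT shift_fun.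
Proof. exact: measurableT_comp (measurable_funPT h) (measurable_shift a). Qed.
HB.instance Definition _ :=
  isMeasurableFun.Build _ _ _ _ shift_fun measurable_shift_fun.

Definition shift_nnsfun : {nnsfun measurableTypeR R >-> R} := shift_fun.

Lemma sintegral_shift : sintegral mu shift_nnsfun = sintegral mu h.
Proof.
have preimage_shift y : mu (shift_nnsfun @^-1` [set y]) = mu (h @^-1` [set y]).
  have -> : shift_nnsfun @^-1` [set y] = (fun x => x + a) @^-1` (h @^-1` [set y])
    by [].
  rewrite lebesgue_measure_shift //.
  exact: (measurable_funPTI h (measurable_set1 y)).
by rewrite /sintegral; under eq_fsbigr do rewrite preimage_shift.
Qed.

End shift_nnsfun.

Local Open Scope ereal_scope.

(* Measurability is not assumed: the integrands of [iter_int] are not known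
   to be measurable, so the facts below are derived directly from the
   supremum over simple functions. *)
Lemma le_ge0_integralT (F G : R -> \bar R) : (forall x, 0 <= F x) ->
  (forall x, F x <= G x) -> \int[mu]_x F x <= \int[mu]_x G x.
Proof.
move=> F0 FG; have G0 x : 0 <= G x by apply: le_trans (FG x).
rewrite !ge0_integralTE //; apply: ge_ereal_sup => _ [h /= hF <-].
by apply: ereal_sup_ubound; exists h => //= x; exact: le_trans (hF x) (FG x).
Qed.

Let ge0_integral_shift_le (G : R -> \bar R) (t : R) : (forall x, 0 <= G x) ->
  \int[mu]_x G (x + t)%R <= \int[mu]_x G x.
Proof.
move=> G0; rewrite !ge0_integralTE //; apply: ge_ereal_sup => _ [h /= hG <-].
apply: ereal_sup_ubound; exists (shift_nnsfun h (- t)).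
  by move=> x /=; rewrite /shift_fun; have := hG (x - t)%R; rewrite subrK.
exact: sintegral_shift.
Qed.

Lemma ge0_integral_shift (G : R -> \bar R) (t : R) : (forall x, 0 <= G x) ->
  \int[mu]_x G (x + t)%R = \int[mu]_x G x.
Proof.
move=> G0; apply/eqP; rewrite eq_le (ge0_integral_shift_le t G0) /=.
have := ge0_integral_shift_le (- t)%R (fun x => G0 (x + t)%R).
by under eq_integral do rewrite addrNK.
Qed.

Lemma ge0_integralZl_le (F : R -> \bar R) (c : R) : (0 < c)%R ->
  (forall x, 0 <= F x) -> \int[mu]_x (c%:E * F x) <= c%:E * \int[mu]_x F x.
Proof.
move=> c_gt0 F0; have cF0 x : 0 <= c%:E * F x by rewrite mule_ge0 // lee_fin ltW.
rewrite !ge0_integralTE //; apply: ge_ereal_sup => _ [h /= hF <-].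
have cV_ge0 : (0 <= c^-1)%R by rewrite invr_ge0 ltW.
have -> : sintegral mu h = c%:E * sintegral mu (scale_nnsfun h cV_ge0).
  rewrite /scale_nnsfun (_ : sintegral mu (mul_nnsfun _ _) =
                              sintegral mu (cst c^-1 \* h)%R); last first.
    exact: eq_sintegral.
  by rewrite sintegralrM muleA -EFinM mulfV ?gt_eqF // mul1e.
apply: lee_wpmul2l; first by rewrite lee_fin ltW.
apply: ereal_sup_ubound; exists (scale_nnsfun h cV_ge0) => //= x.
by have := hF x; rewrite -(@lee_pdivrMl _ c).
Qed.

End lebesgue_translation.

Section iter_int.
Context {R : realType}.

Definition agree_off (l : seq nat) (phi psi : int -> R) :=
  forall i : int, i \notin map Posz l -> psi i = phi i.

Lemma agree_off_upd k l phi psi x :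
  agree_off l (upd phi k x) psi -> agree_off (k :: l) phi psi.
Proof.
move=> agr i; rewrite /= inE negb_or => /andP[ik il].
by rewrite agr // /upd (negbTE ik).
Qed.

Local Open Scope ereal_scope.
Implicit Types (l : seq nat) (f g : (int -> R) -> \bar R).

Lemma iter_int_ge0 l f phi : (forall psi, 0 <= f psi) -> 0 <= iter_int l f phi.
Proof.
move=> f0; elim: l phi => [|k l IH] phi //=.
by apply: integral_ge0 => x _; exact: IH.
Qed.

Lemma iter_int0 l (phi : int -> R) : iter_int l (fun=> 0) phi = 0.
Proof.
elim: l phi => [|k l IH] phi //=.
by under eq_integral do rewrite IH; exact: integral0.
Qed.

Lemma eq_iter_int l f g phi :
  (forall psi, agree_off l phi psi -> f psi = g psi) ->
  iter_int l f phi = iter_int l g phi.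
Proof.
elim: l phi => [|k l IH] phi fg /=; first exact: fg.
by apply: eq_integral => x _; apply: IH => psi /agree_off_upd; exact: fg.
Qed.

Lemma le_iter_int l f g phi : (forall psi, 0 <= f psi) ->
  (forall psi, agree_off l phi psi -> f psi <= g psi) ->
  iter_int l f phi <= iter_int l g phi.
Proof.
move=> f0; elim: l phi => [|k l IH] phi fg /=; first exact: fg.
apply: le_ge0_integralT => x; first exact: iter_int_ge0.
by apply: IH => psi /agree_off_upd; exact: fg.
Qed.

Lemma iter_int_agree_off l f phi psi :
  agree_off l phi psi -> iter_int l f phi = iter_int l f psi.
Proof.
elim: l phi psi => [|k l IH] phi psi agr /=.
  by congr f; apply: boolp.funext => i; rewrite agr.
congr (integral _ _ _); apply: boolp.funext => x; apply: IH => i.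
rewrite /upd; case: ifP => // ik il; apply: agr.
by rewrite /= inE negb_or ik.
Qed.

Lemma iter_intZl_le l f (c : R) phi : (0 < c)%R -> (forall psi, 0 <= f psi) ->
  iter_int l (fun psi => c%:E * f psi) phi <= c%:E * iter_int l f phi.
Proof.
move=> c_gt0 f0; elim: l phi => [|k l IH] phi //=.
apply: le_trans (ge0_integralZl_le c_gt0 (fun x => iter_int_ge0 _ _ f0)).
apply: le_ge0_integralT => x; last exact: IH.
by apply: iter_int_ge0 => psi; rewrite mule_ge0 // lee_fin ltW.
Qed.

Lemma iter_int_shift l f (c phi : int -> R) : (forall psi, 0 <= f psi) ->
  iter_int l (fun psi => f (fun i => psi i - c i)%R) phi =
  iter_int l f (fun i => phi i - c i)%R.
Proof.
move=> f0; elim: l phi => [|k l IH] phi //=.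
have upd_shift x : (fun i => upd phi k x i - c i)%R =
    upd (fun i => phi i - c i)%R k (x - c k%:Z)%R.
  by apply: boolp.funext => i; rewrite /upd; case: ifP => // /eqP ->.
under eq_integral do rewrite IH upd_shift.
exact: ge0_integral_shift (fun y => iter_int_ge0 _ _ f0).
Qed.

End iter_int.

Section bilaplacian.
Context {R : realType}.
Implicit Types (N : nat) (x y phi : int -> R).

Definition dlap phi (k : nat) : R :=
  phi (k%:Z + 1) + phi (k%:Z - 1) - 2 * phi k%:Z.

Definition Hbil N x y : R := \sum_(0 <= k < N.+1) dlap x k * dlap y k.

Lemma HbilapE N phi : Hbilap N phi = \sum_(0 <= k < N.+1) 2^-1 * dlap phi k ^+ 2.
Proof. by []. Qed.

Lemma Hbilap_ge0 N phi : 0 <= Hbilap N phi.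
Proof. by rewrite HbilapE; apply: sumr_ge0 => k _; rewrite mulr_ge0 ?sqr_ge0. Qed.

Lemma HbilapD N x y :
  Hbilap N (fun i => x i + y i) = Hbilap N x + Hbil N x y + Hbilap N y.
Proof.
rewrite !HbilapE /Hbil -!big_split.
by apply: eq_bigr => k _ /=; rewrite /dlap; field.
Qed.

Lemma HbilapZ N (t : R) y : Hbilap N (fun i => t * y i) = t ^+ 2 * Hbilap N y.
Proof.
by rewrite !HbilapE mulr_sumr; apply: eq_bigr => k _; rewrite /dlap; field.
Qed.

Lemma HbilZr N (t : R) x y : Hbil N x (fun i => t * y i) = t * Hbil N x y.
Proof.
by rewrite /Hbil mulr_sumr; apply: eq_bigr => k _; rewrite /dlap; field.
Qed.

(* The cross term [Hbil N x (phi - x)] is nonnegative: otherwise moving from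
   [x] slightly towards [phi] would decrease [Hbilap]. *)
Lemma Hbilap_min_convex N (K : set (int -> R)) x :
  (forall y z (t : R), K y -> K z -> 0 <= t <= 1 ->
     K (fun i => y i + t * (z i - y i))) ->
  K x -> (forall y, K y -> Hbilap N x <= Hbilap N y) ->
  forall phi, K phi ->
    Hbilap N x + Hbilap N (fun i => phi i - x i) <= Hbilap N phi.
Proof.
move=> convK Kx xmin phi Kphi; set y := fun i => phi i - x i.
have -> : Hbilap N phi = Hbilap N x + Hbil N x y + Hbilap N y.
  by rewrite -HbilapD; congr Hbilap; apply: boolp.funext => i; rewrite /y; ring.
rewrite -addrA lerD2l lerDr leNgt; apply/negP => B_lt0.
set B := Hbil N x y in B_lt0; set h := Hbilap N y.
have h_ge0 : 0 <= h by exact: Hbilap_ge0.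
have hB_gt0 : 0 < h - B by lra.
pose t := - B / (h - B).
have t_gt0 : 0 < t by rewrite divr_gt0 // oppr_gt0.
have t01 : 0 <= t <= 1 by rewrite ltW //= ler_pdivrMr // mul1r; lra.
have := xmin _ (convK _ _ t Kx Kphi t01); rewrite HbilapD HbilapZ HbilZr -/B -/h.
have : t * B + t ^+ 2 * h = t * (- B ^+ 2 / (h - B)) by rewrite /t; field; lra.
have : 0 < B ^+ 2 / (h - B) by rewrite divr_gt0 //; nra.
nra.
Qed.

Definition in_box (lo hi : int -> R) phi := forall i, lo i <= phi i <= hi i.

Lemma in_box_convex (lo hi y z : int -> R) (t : R) :
  in_box lo hi y -> in_box lo hi z -> 0 <= t <= 1 ->
  in_box lo hi (fun i => y i + t * (z i - y i)).
Proof.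
move=> By Bz /andP[t0 t1] i.
have /andP[? ?] := By i; have /andP[? ?] := Bz i; apply/andP; split; nra.
Qed.

Lemma continuous_sum (T : topologicalType) (s : seq nat) (F : nat -> T -> R) :
  (forall k, continuous (F k)) -> continuous (fun t => \sum_(k <- s) F k t).
Proof.
move=> cF; elim: s => [|k s IH].
  rewrite (_ : (fun t => _) = fun=> 0); first by move=> t; exact: cst_continuous.
  by apply: boolp.funext => t; rewrite big_nil.
rewrite (_ : (fun t => _) = fun t => F k t + \sum_(j <- s) F j t).
  by move=> t; exact: (@continuousD _ _ _ (F k) _ t (cF k t) (IH t)).
by apply: boolp.funext => t; rewrite big_cons.
Qed.

Import ArrowAsProduct.

Lemma continuous_Hbilap N : continuous (@Hbilap R N).
Proof.
apply: continuous_sum => k.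
have cproj (j : int) : continuous (fun psi : int -> R => psi j).
  exact: (@proj_continuous int (fun _ => R) j).
have cdlap : continuous (dlap^~ k).
  move=> psi; exact: (continuousB (continuousD (cproj _ psi) (cproj _ psi))
    (continuousM (@cst_continuous _ _ (2 : R) psi) (cproj _ psi))).
move=> psi; apply: (continuousM (@cst_continuous _ _ (2^-1 : R) psi)).
rewrite (_ : (fun phi => _) = dlap^~ k \* dlap^~ k); last first.
  by apply: boolp.funext => phi; rewrite /= expr2.
exact: (continuousM (cdlap psi) (cdlap psi)).
Qed.

Lemma Hbilap_box_minimizer N (lo hi : int -> R) : (forall i, lo i <= hi i) ->
  exists2 x, in_box lo hi x &
    forall y, in_box lo hi y -> Hbilap N x <= Hbilap N y.
Proof.
move=> lo_le_hi; set K := [set f : int -> R | forall i, `[lo i, hi i] (f i)].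
have cK : compact K.
  exact: (@tychonoff int (fun _ => R) _
            (fun i => @segment_compact R (lo i) (hi i))).
have K0 : K !=set0 by exists lo => i /=; rewrite in_itv /= lexx lo_le_hi.
have [x /set_mem Kx xmin] :=
  compact_EVT_min K0 cK (continuous_subspaceT (@continuous_Hbilap N)).
exists x => [i|y Ky]; first by have := Kx i; rewrite /= in_itv.
by apply: xmin; rewrite inE => i /=; rewrite in_itv; exact: Ky.
Qed.

End bilaplacian.

Section interpolation.
Context {R : realType}.

Lemma hN_grid N (phi : int -> R) k : (0 < N)%N -> (k <= N)%N ->
  hN N phi (k%:R / N%:R) = phi k%:Z / N%:R ^+ 2.
Proof.
move=> N_gt0 kN; rewrite /hN divfK ?pnatr_eq0 -?lt0n // natrK.
case: (ltnP k N) => [kN'|Nk].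
  have -> : minn k N.-1 = k by apply/minn_idPl; rewrite -ltnS prednK.
  by rewrite subrr mul0r addr0.
have -> : k = N by apply/eqP; rewrite eqn_leq kN Nk.
rewrite (minn_idPr (leq_pred N)); case: N N_gt0 {kN Nk} => // n _ /=.
have -> : (n%:Z + 1)%R = n.+1%:Z by rewrite -addn1 PoszD.
by rewrite -natr1 addrAC subrr add0r mul1r addrC subrK.
Qed.

Let abs_le_sum N (phi : int -> R) k : (k <= N)%N ->
  `|phi k%:Z| <= \sum_(0 <= j < N.+1) `|phi j%:Z|.
Proof.
move=> kN; rewrite /index_iota subn0 (bigD1_seq k) ?iota_uniq.
- by rewrite lerDl sumr_ge0.
- by rewrite mem_iota add0n ltnS kN.
- by [].
Qed.

Lemma hN_bounded N (phi : int -> R) : (0 < N)%N ->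
  exists M, forall t, 0 <= t <= 1 -> `|hN N phi t| <= M.
Proof.
move=> N_gt0; set S := \sum_(0 <= j < N.+1) `|phi j%:Z|.
exists ((S + N%:R * (S + S)) / N%:R ^+ 2) => t /andP[t0 t1].
have N_gt0' : (0 : R) < N%:R by rewrite ltr0n.
rewrite /hN normrM normfV normrX normr_nat ler_pM2r ?invr_gt0 ?exprn_gt0 //.
set k := minn _ _.
have kN : (k <= N.-1)%N by rewrite /k geq_minr.
have k1N : (k.+1 <= N)%N by rewrite (leq_ltn_trans kN) // prednK.
have phi_k := abs_le_sum phi (leq_trans kN (leq_pred N)).
have phi_k1 := abs_le_sum phi k1N.
have -> : (k%:Z + 1)%R = k.+1%:Z by rewrite -addn1 PoszD.
have slope : `|t * N%:R - k%:R| <= N%:R.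
  have : (k%:R : R) <= N%:R by rewrite ler_nat (leq_trans kN (leq_pred N)).
  have : t * N%:R <= N%:R by rewrite ler_piMl // ltW.
  have : 0 <= t * N%:R by rewrite mulr_ge0 // ltW.
  have : (0 : R) <= k%:R by rewrite ler0n.
  rewrite ler_norml; move=> *; apply/andP; split; lra.
apply: le_trans (ler_normD _ _) _; apply: lerD => //.
rewrite normrM; apply: ler_pM => //.
by apply: le_trans (ler_normB _ _) _; exact: lerD.
Qed.

Lemma continuous_bounded01 (g : R -> R) : {within `[0, 1], continuous g} ->
  exists M, forall t, 0 <= t <= 1 -> `|g t| <= M.
Proof.
move=> cg; have [c1 _ g_le] := EVT_max ler01 cg.
have [c2 _ g_ge] := EVT_min ler01 cg.
exists (`|g c1| + `|g c2|) => t t01.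
have t01' : t \in `[0, 1]%R by rewrite in_itv.
have := g_le _ t01'; have := g_ge _ t01'.
have := ler_norm (g c1); have := ler_norm (- g c2); rewrite normrN.
have := normr_ge0 (g c1); have := normr_ge0 (g c2).
by rewrite ler_norml => *; apply/andP; split; lra.
Qed.

Lemma supnorm01_lt_grid N (phi : int -> R) (g : R -> R) (d : R) : (0 < N)%N ->
  {within `[0, 1], continuous g} ->
  supnorm01 (fun t => hN N phi t - g t) < d ->
  forall k, (k <= N)%N -> `|phi k%:Z / N%:R ^+ 2 - g (k%:R / N%:R)| < d.
Proof.
move=> N_gt0 cg sup_lt k kN.
have [M1 hM1] := hN_bounded phi N_gt0.
have [M2 gM2] := continuous_bounded01 cg.
have ub : has_ubound [set `|hN N phi t - g t| | t in `[0, 1]].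
  exists (M1 + M2) => _ [t /= t01 <-]; move: t01; rewrite in_itv /= => t01.
  by apply: le_trans (ler_normB _ _) _; apply: lerD; [exact: hM1|exact: gM2].
apply: le_lt_trans sup_lt; rewrite -hN_grid //.
apply: ub_le_sup => //; exists (k%:R / N%:R) => //.
by rewrite /= in_itv /= divr_ge0 ?ler0n //= ler_pdivrMr ?ltr0n // mul1r ler_nat.
Qed.

End interpolation.

Section gibbs.
Context {R : realType}.

Local Open Scope ereal_scope.

Lemma iter_int_gibbs_le (N : nat) (l : seq nat) (A : set (int -> R))
    (lo hi x : int -> R) :
  (forall i, i \notin map Posz l -> x i = 0%R) ->
  in_box lo hi x -> (forall y, in_box lo hi y -> (Hbilap N x <= Hbilap N y)%R) ->
  (forall psi, agree_off l (fun=> 0%R) psi -> A psi -> in_box lo hi psi) ->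
  iter_int l (fun psi => (\1_A psi * expR (- Hbilap N psi))%:E) (fun=> 0%R)
  <= (expR (- Hbilap N x))%:E *
     iter_int l (fun psi => (expR (- Hbilap N psi))%:E) (fun=> 0%R).
Proof.
move=> x_pinned Bx xmin A_box; set c := expR (- Hbilap N x).
have c_gt0 : (0 < c)%R by exact: expR_gt0.
have gibbs psi : agree_off l (fun=> 0%R) psi ->
    (\1_A psi * expR (- Hbilap N psi))%R%:E <=
    c%:E * (expR (- Hbilap N (fun i => psi i - x i)))%R%:E.
  move=> agr; rewrite indicE -EFinM lee_fin.
  case: (boolP (psi \in A)) => [/set_mem Apsi|_]; last first.
    by rewrite mul0r mulr_ge0 ?expR_ge0 ?ltW.
  rewrite mul1r /c -expRD ler_expR.
  have := Hbilap_min_convex (@in_box_convex _ lo hi) Bx xmin (A_box _ agr Apsi).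
  lra.
apply: le_trans (le_iter_int _ gibbs) _ => [psi|].
  by rewrite lee_fin mulr_ge0 ?expR_ge0 ?indicE ?ler0n.
have weight_ge0 (psi : int -> R) : 0 <= (expR (- Hbilap N psi))%R%:E.
  by rewrite lee_fin expR_ge0.
apply: le_trans (iter_intZl_le _ _ c_gt0 (fun psi => weight_ge0 _)) _.
rewrite (@iter_int_shift _ l (fun psi => (expR (- Hbilap N psi))%R%:E)) //.
rewrite (iter_int_agree_off _ (psi := fun=> 0%R)) // => i /x_pinned ->.
by rewrite subrr.
Qed.

Lemma fine_div_le (n d : \bar R) (c : R) : 0 <= n -> 0 <= d -> (0 <= c)%R ->
  n <= c%:E * d -> (fine n / fine d <= c)%R.
Proof.
move=> n_ge0 d_ge0 c_ge0; case: d d_ge0 => [r||] //= r_ge0; last first.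
  by rewrite invr0 mulr0.
have [->|r_neq0] := eqVneq r 0%R; first by rewrite invr0 mulr0.
have r_gt0 : (0 < r)%R by rewrite lt_neqAle eq_sym r_neq0 -lee_fin.
by case: n n_ge0 => [s||] //= _; rewrite -EFinM lee_fin ler_pdivrMr.
Qed.

End gibbs.

Section energy.
Context {R : realType}.

Lemma EN_ge0 N (h : int -> R) : 0 <= EN N h.
Proof.
rewrite /EN mulr_ge0 ?invr_ge0 //; apply: sumr_ge0 => k _.
by rewrite mulr_ge0 ?sqr_ge0 // mulr_ge0 ?invr_ge0 ?exprn_ge0.
Qed.

Lemma EN_Hbilap N (x : int -> R) : (0 < N)%N ->
  N%:R * EN N (fun i => x i / N%:R ^+ 2) = Hbilap N x.
Proof.
move=> N_gt0; have N_neq0 : (N%:R : R) != 0 by rewrite pnatr_eq0 -lt0n.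
rewrite /EN HbilapE mulrA (mulrC N%:R) -mulrA !mulr_sumr.
by apply: eq_bigr => k _; rewrite /dlap; field; rewrite N_neq0.
Qed.

End energy.

Section tube.
Context {R : realType}.

Lemma norm_divB_lt_box (a b d M : R) : 0 < M -> `|a / M - b| < d ->
  M * (b - d) <= a <= M * (b + d).
Proof.
move=> M_gt0; rewrite ltr_norml => /andP[lo_lt hi_lt].
have aE : a = M * (a / M) by rewrite mulrC divfK ?lt0r_neq0.
by rewrite [X in _ <= X <= _]aE !ler_pM2l //; apply/andP; split; lra.
Qed.

Lemma box_norm_divB_le (a b d M : R) : 0 < M ->
  M * (b - d) <= a <= M * (b + d) -> `|a / M - b| <= d.
Proof.
move=> M_gt0; have aE : a = M * (a / M) by rewrite mulrC divfK ?lt0r_neq0.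
rewrite [X in _ <= X <= _]aE !ler_pM2l // => /andP[lo_le hi_le].
by rewrite ler_norml; apply/andP; split; lra.
Qed.

Variables (N : nat) (F : seq nat) (g : R -> R) (d : R).

Definition tube_lo (i : int) : R :=
  if i \in map Posz F then N%:R ^+ 2 * (g ((absz i)%:R / N%:R) - d) else 0.

Definition tube_hi (i : int) : R :=
  if i \in map Posz F then N%:R ^+ 2 * (g ((absz i)%:R / N%:R) + d) else 0.

Lemma tube_lo_le_hi : 0 <= d -> forall i, tube_lo i <= tube_hi i.
Proof.
move=> d_ge0 i; rewrite /tube_lo /tube_hi.
by case: ifP => // _; rewrite ler_wpM2l //; lra.
Qed.

Lemma in_tube_pinned x : in_box tube_lo tube_hi x ->
  forall i, i \notin map Posz F -> x i = 0.
Proof.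
move=> Bx i /negbTE iF; have := Bx i; rewrite /tube_lo /tube_hi iF.
by move=> /andP[x_ge0 x_le0]; apply/eqP; rewrite eq_le x_ge0 x_le0.
Qed.

Lemma in_tube_supnorm psi : (0 < N)%N -> {within `[0, 1], continuous g} ->
  (forall k, k \in F -> (k <= N)%N) -> agree_off F (fun=> 0) psi ->
  supnorm01 (fun t => hN N psi t - g t) < d -> in_box tube_lo tube_hi psi.
Proof.
move=> N_gt0 cg F_le_N psi_pinned sup_lt i; rewrite /tube_lo /tube_hi.
case: ifPn => [|iF]; last by rewrite psi_pinned // lexx.
case/mapP => k kF ->.
apply: norm_divB_lt_box; first by rewrite exprn_gt0 ?ltr0n.
exact: (supnorm01_lt_grid N_gt0 cg sup_lt (F_le_N _ kF)).
Qed.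

Lemma in_tube_grid x : (0 < N)%N -> in_box tube_lo tube_hi x ->
  (forall j, (j <= N)%N -> j%:Z \notin map Posz F -> `|g (j%:R / N%:R)| <= d) ->
  forall j, (j <= N)%N -> `|x j%:Z / N%:R ^+ 2 - g (j%:R / N%:R)| <= d.
Proof.
move=> N_gt0 Bx g_pinned j jN.
case: (boolP (j%:Z \in map Posz F)) => [jF|jF]; last first.
  by rewrite in_tube_pinned // mul0r sub0r normrN g_pinned.
apply: box_norm_divB_le; first by rewrite exprn_gt0 ?ltr0n.
by have := Bx j%:Z; rewrite /tube_lo /tube_hi jF.
Qed.

End tube.

Lemma free_sites_lt N P k : k \in free_sites N P -> (k < N)%N.
Proof.
rewrite mem_filter mem_iota => /andP[_ /andP[k_ge1]].
case: N => [|n] /=; first by rewrite addn0 ltnNge k_ge1.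
by rewrite add1n.
Qed.

Theorem lemma3p12 (R : realType) (delta : R) (hdelta : 0 < delta) :
  exists N0 : nat, forall (N : nat), (N0 <= N)%N ->
  forall (P : pred nat), (forall k, P k -> (1 <= k <= N.-1)%N) ->
  forall (g : R -> R), {within `[0, 1]%classic, continuous g} ->
    gamma0 N P [set phi | supnorm01 (fun t => hN N phi t - g t) < delta]
    <= expR (- (N%:R * inf [set EN N h | h in
                 [set h : int -> R | forall j : nat, (j <= N)%N ->
                    `|h j%:Z - g (j%:R / N%:R)| <= 2 * delta]])).
Proof.
exists 1%N => N N_gt0 P _ g cg.
set A := [set phi | _]; set F := free_sites N P.
have F_le_N k : k \in F -> (k <= N)%N by move/free_sites_lt/ltnW.
have iter_weight_ge0 (f : (int -> R) -> R) : (forall psi, 0 <= f psi) ->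
    (0 <= iter_int F (fun psi => (f psi)%:E) (fun=> 0%R))%E.
  by move=> f0; apply: iter_int_ge0 => psi; rewrite lee_fin.
have den_ge0 := iter_weight_ge0 _ (fun psi => expR_ge0 (- Hbilap N psi)).
apply: (fine_div_le _ den_ge0 (expR_ge0 _)).
  by apply: iter_weight_ge0 => psi; rewrite mulr_ge0 ?expR_ge0 ?indicE ?ler0n.
have [[phi0 [Aphi0 phi0_pinned]]|noA] :=
  pselect (exists phi0, A phi0 /\ agree_off F (fun=> 0) phi0); last first.
  rewrite (eq_iter_int (g := fun=> 0%E)) ?iter_int0 => [|psi agr].
    by rewrite mule_ge0 ?lee_fin ?expR_ge0.
  by rewrite indicE memNset ?mul0r // => Apsi; apply: noA; exists psi.
have [x Bx xmin] := Hbilap_box_minimizer N (tube_lo_le_hi N F g (ltW hdelta)).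
apply: le_trans (iter_int_gibbs_le (in_tube_pinned Bx) Bx xmin _) _.
  by move=> psi agr Apsi; exact: in_tube_supnorm.
rewrite lee_wpmul2r // lee_fin ler_expR lerN2 -(EN_Hbilap x N_gt0).
rewrite ler_pM2l ?ltr0n //.
apply: ge_inf; first by exists 0 => _ [h _ <-]; exact: EN_ge0.
exists (fun i => x i / N%:R ^+ 2) => // j jN.
apply: le_trans (in_tube_grid N_gt0 Bx _ jN) _ => [k kN kF|]; last lra.
apply: ltW; have := supnorm01_lt_grid N_gt0 cg Aphi0 kN.
by rewrite phi0_pinned // mul0r sub0r normrN.
Qed.
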